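(* Let $\mathcal{H}=\mathbb{C}^d$ and let $|e\rangle$ be a unit vector orthogonal to $\mathcal{H}$ in $\mathcal{H}\oplus\mathrm{span}\{|e\rangle\}$. For $\epsilon\in[0,1]$ let $\mathcal{E}_\epsilon(\rho)=\epsilon\rho+(1-\epsilon)|e\rangle\langle e|$ be the erasure channel. Then for any $\epsilon_1,\epsilon_2\in[0,1]$, a single-system probe is sufficient for distinguishing $\mathcal{E}_{\epsilon_1}$ and $\mathcal{E}_{\epsilon_2}$: the maximum of the success probability over single-system probes equals its maximum over all probes, including entangled probes with an arbitrary ancilla.
   Context: For two channels chosen with equal priors $1/2$, the single-shot success probability with a single-system probe $\rho$ on $\mathcal{H}$ is $\frac12+\frac14\|\mathcal{N}_1(\rho)-\mathcal{N}_2(\rho)\|_1$, and with a bipartite probe $\rho_{AB}$ on $\mathcal{H}\otimes\mathbb{C}^{d'}$ (any finite $d'$; channel acting on $A$, identity on $B$) it is $\frac12+\frac14\|(\mathcal{N}_1\otimes\mathrm{id})(\rho_{AB})-(\mathcal{N}_2\otimes\mathrm{id})(\rho_{AB})\|_1$; $\|\cdot\|_1$ is the trace norm. *)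

From mathcomp Require Import all_boot all_order all_algebra.
From mathcomp Require Import complex mxtens.
From mathcomp Require Import reals.

Set Implicit Arguments.
Unset Strict Implicit.
Unset Printing Implicit Defensive.

Import Order.TTheory GRing.Theory Num.Theory.
Local Open Scope ring_scope.
Local Open Scope complex_scope.

Section QInfo.
Variable R : realType.
Local Notation C := (R[i]).

Definition adjmx {m n} (X : 'M[C]_(m, n)) : 'M[C]_(n, m) := (map_mx Num.conj X)^T.

Definition psd {n} (X : 'M[C]_n) : Prop :=
  adjmx X = X /\ forall v : 'rV[C]_n, 0 <= (v *m X *m adjmx v) 0 0.

Definition is_state {n} (rho : 'M[C]_n) : Prop := psd rho /\ \tr rho = 1.

(* trace norm ||X||_1 = Tr sqrt(X^dagger X) = sum of the square roots of the
   eigenvalues (with multiplicity) of the Hermitian matrix X^dagger X *)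
Definition trace_norm {m n} (X : 'M[C]_(m, n)) : C :=
  \sum_(i < n) sqrtC (spectral_diag (adjmx X *m X) 0 i).

(* The erasure channel E_eps : M_d -> M_(d+1), where C^(d+1) = H (+) span{e}
   and |e> is the last basis vector:
   E_eps(X) = eps X (+) (1-eps) Tr(X) |e><e|  (linear extension of
   rho |-> eps rho + (1-eps)|e><e|). *)
Definition erasure (d : nat) (eps : R) (X : 'M[C]_d) : 'M[C]_(d + 1) :=
  (eps%:C) *: block_mx X 0 0 0
  + ((1 - eps)%:C * \tr X) *: block_mx 0 0 0 (1%:M : 'M[C]_1).

(* (N (x) id_k) applied to an operator X on C^m (x) C^k, where C^m (x) C^k
   is identified with C^(m*k) via mxtens_index (first factor = system A). *)
Definition apply_A {m n k} (N : 'M[C]_m -> 'M[C]_n) (X : 'M[C]_(m * k))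
  : 'M[C]_(n * k) :=
  \matrix_(i, j)
    N (\matrix_(a, a') X (mxtens_index (a, (mxtens_unindex i).2))
                         (mxtens_index (a', (mxtens_unindex j).2)))
      (mxtens_unindex i).1 (mxtens_unindex j).1.

Definition psucc_single {m n} (N1 N2 : 'M[C]_m -> 'M[C]_n) (rho : 'M[C]_m) : C :=
  2^-1 + 4^-1 * trace_norm (N1 rho - N2 rho).

Definition psucc_bip {m n k} (N1 N2 : 'M[C]_m -> 'M[C]_n) (rho : 'M[C]_(m * k)) : C :=
  2^-1 + 4^-1 * trace_norm (apply_A N1 rho - apply_A N2 rho).

End QInfo.

From mathcomp Require Import all_boot all_order all_algebra.
From mathcomp Require Import complex mxtens.
From mathcomp Require Import reals.
From mathcomp Require Import ring.

(* Write E_eps = eps J + (1 - eps) T, where J embeds H into H (+) span{e} and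
   T(rho) = Tr(rho) |e><e|.  Both J and T are trace-preserving and completely
   positive (they have Kraus forms), so for every probe, entangled or not, the
   difference of the two outputs is (eps1 - eps2) (P - Q) with P, Q positive
   semidefinite of trace 1, whose trace norm is at most 2 |eps1 - eps2|.  A
   basis state |a><a| of H attains this bound: J|a><a| and T|a><a| have
   orthogonal supports. *)

Set Implicit Arguments.
Unset Strict Implicit.
Unset Printing Implicit Defensive.

Import Order.TTheory GRing.Theory Num.Theory.
Local Open Scope ring_scope.
Local Open Scope complex_scope.

Section TraceNorm.
Variable R : realType.
Local Notation C := (R[i]).

Lemma adjmxE m n (X : 'M[C]_(m, n)) : adjmx X = (X ^t* )%sesqui.
Proof. by rewrite /adjmx map_trmx. Qed.

Lemma adjmxK m n (X : 'M[C]_(m, n)) : adjmx (adjmx X) = X.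
Proof. by apply/matrixP => i j; rewrite !mxE conjCK. Qed.

Lemma adjmxM m n p (X : 'M[C]_(m, n)) (Y : 'M[C]_(n, p)) :
  adjmx (X *m Y) = adjmx Y *m adjmx X.
Proof. by rewrite /adjmx map_mxM trmx_mul. Qed.

Lemma adjmxD m n (X Y : 'M[C]_(m, n)) : adjmx (X + Y) = adjmx X + adjmx Y.
Proof. by apply/matrixP => i j; rewrite !mxE rmorphD. Qed.

Lemma adjmxB m n (X Y : 'M[C]_(m, n)) : adjmx (X - Y) = adjmx X - adjmx Y.
Proof. by apply/matrixP => i j; rewrite !mxE rmorphB. Qed.

Lemma adjmxZ m n (c : C) (X : 'M[C]_(m, n)) : adjmx (c *: X) = c^* *: adjmx X.
Proof. by apply/matrixP => i j; rewrite !mxE rmorphM. Qed.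

Lemma adjmx_entry m n (X : 'M[C]_(m, n)) i j : adjmx X i j = (X j i)^*.
Proof. by rewrite !mxE. Qed.

Lemma adjmx0 p q : adjmx (0 : 'M[C]_(p, q)) = 0.
Proof. by apply/matrixP => i j; rewrite !mxE conjC0. Qed.

Lemma adjmx_col p q n (X : 'M[C]_(p, n)) (Y : 'M[C]_(q, n)) :
  adjmx (col_mx X Y) = row_mx (adjmx X) (adjmx Y).
Proof. by rewrite /adjmx map_col_mx tr_col_mx. Qed.

Lemma adjmx_diag n (y : 'rV[C]_n) : (forall i, y 0 i \is Num.real) ->
  adjmx (diag_mx y) = diag_mx y.
Proof.
move=> y_real; apply/matrixP => i j; rewrite !mxE.
have [->|ij] := eqVneq i j; first by rewrite !mulr1n conj_Creal.
by rewrite !mulr0n conjC0.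
Qed.

Lemma psd0 n : psd (0 : 'M[C]_n).
Proof. by split=> [|v]; rewrite ?adjmx0 // mulmx0 mul0mx mxE. Qed.

Lemma psdD n (X Y : 'M[C]_n) : psd X -> psd Y -> psd (X + Y).
Proof.
move=> [hX pX] [hY pY]; split; first by rewrite adjmxD hX hY.
by move=> v; rewrite mulmxDr mulmxDl mxE addr_ge0.
Qed.

Lemma psd_sum n (I : finType) (F : I -> 'M[C]_n) :
  (forall i, psd (F i)) -> psd (\sum_i F i).
Proof.
move=> psdF; apply: (big_ind (fun X : 'M[C]_n => psd X)) => //.
  exact: psd0.
exact: psdD.
Qed.

Lemma psdZ n (c : C) (X : 'M[C]_n) : 0 <= c -> psd X -> psd (c *: X).
Proof.
move=> c_ge0 [hX pX]; split; first by rewrite adjmxZ hX conj_Creal ?ger0_real.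
by move=> v; rewrite -scalemxAr -scalemxAl mxE mulr_ge0.
Qed.

Lemma psd_conj m n (K : 'M[C]_(m, n)) (X : 'M[C]_n) :
  psd X -> psd (K *m X *m adjmx K).
Proof.
move=> [hX pX]; split; first by rewrite !adjmxM adjmxK hX mulmxA.
by move=> v; have := pX (v *m K); rewrite adjmxM !mulmxA.
Qed.

Lemma psd_diag n (y : 'rV[C]_n) : (forall i, 0 <= y 0 i) -> psd (diag_mx y).
Proof.
move=> y_ge0; split; first by rewrite adjmx_diag // => i; rewrite ger0_real.
move=> v; rewrite mul_mx_diag mxE; apply: sumr_ge0 => j _; rewrite !mxE.
by rewrite mulrAC mulr_ge0 // mul_conjC_ge0.
Qed.

Lemma psd_diag_ge0 n (X : 'M[C]_n) i : psd X -> 0 <= X i i.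
Proof.
case=> _ /(_ (delta_mx 0 i)).
by rewrite /adjmx map_delta_mx trmx_delta -rowE -colE !mxE.
Qed.

Lemma char_poly_conj n (P D : 'M[C]_n) : P \in unitmx ->
  char_poly (invmx P *m D *m P) = char_poly D.
Proof.
move=> P_unit; rewrite /char_poly /char_poly_mx.
set pC := map_mx (@polyC C).
have -> : 'X%:M - pC (invmx P *m D *m P) = pC (invmx P) *m ('X%:M - pC D) *m pC P.
  rewrite mulmxBr mulmxBl -!map_mxM mul_mx_scalar -scalemxAl -map_mxM mulVmx //.
  by rewrite map_mx1 scalemx1.
by rewrite !det_mulmx mulrC mulrA -det_mulmx -map_mxM mulmxV // map_mx1 det1 mul1r.
Qed.

Lemma eq_sum_diag_conj n (P Q : 'M[C]_n) (s t : 'rV[C]_n) (F : C -> C) :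
  P \in unitmx -> Q \in unitmx ->
  invmx P *m diag_mx s *m P = invmx Q *m diag_mx t *m Q ->
  \sum_i F (s 0 i) = \sum_i F (t 0 i).
Proof.
move=> P_unit Q_unit /(congr1 char_poly); rewrite !char_poly_conj //.
rewrite !char_poly_trig ?diag_mx_is_trig //.
under eq_bigr do rewrite mxE eqxx mulr1n.
under [in RHS]eq_bigr do rewrite mxE eqxx mulr1n.
rewrite -(big_map (s 0) xpredT (fun x => 'X - x%:P)).
rewrite -(big_map (t 0) xpredT (fun x => 'X - x%:P)).
move=> /prod_XsubC_eq perm_st.
by rewrite -(big_map (s 0) xpredT F) -(big_map (t 0) xpredT F); exact: perm_big.
Qed.

Lemma trace_norm_unitary_diag n (X V : 'M[C]_n) (y : 'rV[C]_n) :
  V \is unitarymx -> (forall i, y 0 i \is Num.real) ->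
  X = invmx V *m diag_mx y *m V -> trace_norm X = \sum_i `|y 0 i|.
Proof.
move=> V_unitary y_real defX.
have V_unit := unitarymx_unit V_unitary.
have invV : invmx V = adjmx V by rewrite invmx_unitary // adjmxE.
have hX : adjmx X = X by rewrite defX invV !adjmxM adjmxK (adjmx_diag y_real) mulmxA.
set A := adjmx X *m X.
have defA : A = invmx V *m diag_mx (\row_j (y 0 j * y 0 j)) *m V.
  by rewrite /A hX defX !mulmxA (mulmxK V_unit) -mulmx_diag !mulmxA.
have /orthomx_spectralP defA' : A \is normalmx.
  by apply/normalmxP; rewrite -!adjmxE /A adjmxM adjmxK.
rewrite /trace_norm -/A.
rewrite (eq_sum_diag_conj sqrtC (spectral_unit A) V_unit (etrans (esym defA') defA)).
by apply: eq_bigr => i _; rewrite mxE -expr2 -real_normK // sqrCK.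
Qed.

Lemma trace_norm_diag n (y : 'rV[C]_n) : (forall i, y 0 i \is Num.real) ->
  trace_norm (diag_mx y) = \sum_i `|y 0 i|.
Proof.
move=> y_real; apply: (trace_norm_unitary_diag (V := 1%:M)) => //.
  by apply/unitarymxP; rewrite trmx1 map_mx1 mulmx1.
by rewrite invmx1 mul1mx mulmx1.
Qed.

Lemma mxtrace_unitary_conj n (V X : 'M[C]_n) : V \is unitarymx ->
  \tr (V *m X *m adjmx V) = \tr X.
Proof.
move=> V_unitary; rewrite mxtrace_mulC mulmxA adjmxE -invmx_unitary //.
by rewrite mulVmx ?unitarymx_unit // mul1mx.
Qed.

Lemma trace_norm_subr_le n (A B : 'M[C]_n) : psd A -> psd B ->
  trace_norm (A - B) <= \tr A + \tr B.
Proof.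
move=> psdA psdB; set Y := A - B.
(* In an eigenbasis of A - B each eigenvalue is the difference of the
   corresponding (nonnegative) diagonal entries of A and B. *)
have /orthomx_spectralP defY : Y \is normalmx.
  by apply/normalmxP; rewrite -adjmxE /Y adjmxB psdA.1 psdB.1.
set V := spectralmx Y in defY; set y := spectral_diag Y in defY.
have V_unitary : V \is unitarymx by exact: spectral_unitarymx.
set q := fun (M : 'M[C]_n) i => (V *m M *m adjmx V) i i.
have q_ge0 M i : psd M -> 0 <= q M i by move=> psdM; apply/psd_diag_ge0/psd_conj.
have V_unit := unitarymx_unit V_unitary.
have diag_y : diag_mx y = V *m Y *m adjmx V.
  by rewrite defY adjmxE -invmx_unitary // !mulmxA mulmxV // mul1mx mulmxK.
have y_q i : y 0 i = q A i - q B i.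
  have := congr1 (fun M : 'M[C]_n => M i i) diag_y; rewrite /= mxE eqxx mulr1n => ->.
  by rewrite /q /Y mulmxBr mulmxBl !mxE.
have y_real i : y 0 i \is Num.real by rewrite y_q rpredB // ger0_real // q_ge0.
have tr_q M : \tr M = \sum_i q M i by rewrite -(mxtrace_unitary_conj M V_unitary).
rewrite (trace_norm_unitary_diag V_unitary y_real defY) tr_q tr_q -big_split.
apply: ler_sum => i _; rewrite y_q.
by rewrite (le_trans (ler_normB (q A i) (q B i))) // !ger0_norm ?q_ge0.
Qed.

Lemma trace_norm_scale_subr_le n (c : R) (A B : 'M[C]_n) : psd A -> psd B ->
  trace_norm (c%:C *: (A - B)) <= `|c%:C| * (\tr A + \tr B).
Proof.
wlog c_ge0 : c A B / 0 <= c => [hwlog psdA psdB|].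
  have [/hwlog->//|c_lt0] := leP 0 c.
  have -> : c%:C *: (A - B) = (- c)%:C *: (B - A).
    by rewrite rmorphN scaleNr -scalerN opprB.
  have -> : `|c%:C| = `|(- c)%:C| by rewrite rmorphN normrN.
  by rewrite [\tr A + _]addrC; apply: hwlog; rewrite // oppr_ge0 ltW.
move=> psdA psdB; have c_ge0' : 0 <= c%:C by rewrite ler0c.
rewrite ger0_norm // scalerBr mulrDr -!mxtraceZ.
by apply: trace_norm_subr_le; apply: psdZ.
Qed.

End TraceNorm.

Section PartialChannel.
Variable R : realType.
Local Notation C := (R[i]).

Lemma sum_mxtens m k (F : 'I_(m * k) -> C) :
  \sum_i F i = \sum_a \sum_b F (mxtens_index (a, b)).
Proof.
rewrite pair_big (reindex (@mxtens_index m k)) /=; first by apply: eq_bigr => -[].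
apply: onW_bij; exists (@mxtens_unindex m k).
  exact: mxtens_indexK.
exact: mxtens_unindexK.
Qed.

Lemma sum_mul_delta p (l0 : 'I_p) (f : 'I_p -> C) : \sum_l f l * (l0 == l)%:R = f l0.
Proof.
rewrite (bigD1 l0) //= eqxx mulr1 big1 ?addr0 // => l.
by rewrite eq_sym => /negPf->; rewrite mulr0.
Qed.

Lemma apply_A_conj m n k (K : 'M[C]_(n, m)) (X : 'M[C]_(m * k)) :
  apply_A (fun Y => K *m Y *m adjmx K) X = (K *t 1%:M) *m X *m adjmx (K *t 1%:M).
Proof.
apply/matrixP => i j; case: (mxtens_indexP i) => i1 i2; case: (mxtens_indexP j) => j1 j2.
rewrite mxE !mxtens_indexK !mxE sum_mxtens /=; apply: eq_bigr => a _.
rewrite adjmx_entry.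
under eq_bigr => b _ do
  rewrite adjmx_entry tensmxE [1%:M _ _]mxE rmorphM rmorph_nat mulrA.
rewrite sum_mul_delta; congr (_ * _).
rewrite mxE [RHS]mxE sum_mxtens; apply: eq_bigr => a' _; rewrite mxE.
under eq_bigr => b _ do rewrite tensmxE [1%:M _ _]mxE mulrAC.
by rewrite sum_mul_delta.
Qed.

Definition kraus_map m n (J : finType) (K : J -> 'M[C]_(n, m)) (Y : 'M[C]_m) :
    'M[C]_n :=
  \sum_j K j *m Y *m adjmx (K j).

Lemma psd_kraus_map m n (J : finType) (K : J -> 'M[C]_(n, m)) (Y : 'M[C]_m) :
  psd Y -> psd (kraus_map K Y).
Proof. by move=> psdY; apply: psd_sum => j; exact: psd_conj. Qed.

Lemma apply_A_kraus_map m n k (J : finType) (K : J -> 'M[C]_(n, m))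
    (X : 'M[C]_(m * k)) :
  apply_A (kraus_map K) X = kraus_map (fun j => K j *t 1%:M) X.
Proof.
apply/matrixP => i i'; rewrite mxE !summxE; apply: eq_bigr => j _.
by rewrite -apply_A_conj [RHS]mxE.
Qed.

Lemma mxtrace_apply_A m n k (N : 'M[C]_m -> 'M[C]_n) (X : 'M[C]_(m * k)) :
  (forall Y, \tr (N Y) = \tr Y) -> \tr (apply_A N X) = \tr X.
Proof.
move=> trN; rewrite /mxtrace !sum_mxtens exchange_big [RHS]exchange_big.
apply: eq_bigr => b _.
set Xb := \matrix_(a, a') X (mxtens_index (a, b)) (mxtens_index (a', b)).
transitivity (\tr (N Xb)); first by apply: eq_bigr => i _; rewrite mxE !mxtens_indexK.
by rewrite trN; apply: eq_bigr => a _; rewrite mxE.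
Qed.

Lemma apply_A_sub_scale m n k (c : C) (N1 N2 M1 M2 : 'M[C]_m -> 'M[C]_n)
    (X : 'M[C]_(m * k)) :
  (forall Y, N1 Y - N2 Y = c *: (M1 Y - M2 Y)) ->
  apply_A N1 X - apply_A N2 X = c *: (apply_A M1 X - apply_A M2 X).
Proof.
move=> eqN; apply/matrixP => i j; rewrite !mxE.
set Xb := \matrix_(a, a') _.
by have /matrixP/(_ (mxtens_unindex i).1 (mxtens_unindex j).1) := eqN Xb; rewrite !mxE.
Qed.

End PartialChannel.

Section Erasure.
Variables (R : realType) (m : nat).
Local Notation C := (R[i]).

Definition embed_kraus (_ : 'I_1) : 'M[C]_(m + 1, m) := col_mx 1%:M 0.

Definition erase_kraus (a : 'I_m) : 'M[C]_(m + 1, m) := col_mx 0 (delta_mx 0 a).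

Lemma kraus_map_embed (Y : 'M[C]_m) : kraus_map embed_kraus Y = block_mx Y 0 0 0.
Proof.
rewrite /kraus_map big_ord1 adjmx_col adjmx0 mul_col_mx mul_col_row mul1mx !mul0mx.
by rewrite mulmx0 /adjmx map_mx1 trmx1 mulmx1.
Qed.

Lemma kraus_map_erase (Y : 'M[C]_m) :
  kraus_map erase_kraus Y = \tr Y *: block_mx 0 0 0 (1%:M : 'M[C]_1).
Proof.
rewrite /mxtrace scaler_suml; apply: eq_bigr => a _.
rewrite /erase_kraus adjmx_col mul_col_mx mul_col_row adjmx0 !mul0mx mulmx0.
rewrite scale_block_mx !scaler0 scalemx1 [X in block_mx _ _ _ X]mx11_scalar.
by rewrite /adjmx map_delta_mx trmx_delta -rowE -colE !mxE.
Qed.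

Lemma erasureE (eps : R) (X : 'M[C]_m) :
  erasure eps X =
  eps%:C *: kraus_map embed_kraus X + (1 - eps)%:C *: kraus_map erase_kraus X.
Proof. by rewrite /erasure kraus_map_embed kraus_map_erase scalerA. Qed.

Lemma erasure_sub (e1 e2 : R) (X : 'M[C]_m) :
  erasure e1 X - erasure e2 X =
  (e1 - e2)%:C *: (kraus_map embed_kraus X - kraus_map erase_kraus X).
Proof.
rewrite !erasureE !rmorphB /=; set P := kraus_map _ X; set Q := kraus_map _ X.
by apply/matrixP => i j; rewrite !mxE; ring.
Qed.

Lemma mxtrace_kraus_map_embed (Y : 'M[C]_m) : \tr (kraus_map embed_kraus Y) = \tr Y.
Proof. by rewrite kraus_map_embed mxtrace_block mxtrace0 addr0. Qed.

Lemma mxtrace_kraus_map_erase (Y : 'M[C]_m) : \tr (kraus_map erase_kraus Y) = \tr Y.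
Proof.
by rewrite kraus_map_erase mxtraceZ mxtrace_block mxtrace0 add0r mxtrace1 mulr1.
Qed.

Lemma trace_norm_erasure_sub_le (e1 e2 : R) (rho : 'M[C]_m) : is_state rho ->
  trace_norm (erasure e1 rho - erasure e2 rho) <= `|(e1 - e2)%:C| * 2.
Proof.
move=> [psd_rho tr_rho]; rewrite erasure_sub.
apply: le_trans
  (trace_norm_scale_subr_le _ (psd_kraus_map _ psd_rho) (psd_kraus_map _ psd_rho)) _.
by rewrite mxtrace_kraus_map_embed mxtrace_kraus_map_erase tr_rho -mulr2n.
Qed.

Lemma trace_norm_apply_A_erasure_sub_le k (e1 e2 : R) (rho : 'M[C]_(m * k)) :
  is_state rho ->
  trace_norm (apply_A (erasure e1) rho - apply_A (erasure e2) rho)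
    <= `|(e1 - e2)%:C| * 2.
Proof.
move=> [psd_rho tr_rho].
rewrite (apply_A_sub_scale _ (erasure_sub e1 e2)) !apply_A_kraus_map.
apply: le_trans
  (trace_norm_scale_subr_le _ (psd_kraus_map _ psd_rho) (psd_kraus_map _ psd_rho)) _.
by rewrite -!apply_A_kraus_map !mxtrace_apply_A ?tr_rho -?mulr2n //;
  [exact: mxtrace_kraus_map_erase | exact: mxtrace_kraus_map_embed].
Qed.

Lemma is_state_diag_delta (a : 'I_m) : is_state (diag_mx (delta_mx 0 a) : 'M[C]_m).
Proof.
split; first by apply: psd_diag => i; rewrite mxE ler0n.
rewrite mxtrace_diag (bigD1 a) //= mxE !eqxx big1 ?addr0 // => i /negPf ia.
by rewrite mxE ia andbF.
Qed.

Lemma trace_norm_erasure_sub_delta (e1 e2 : R) (a : 'I_m) :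
  let rho := diag_mx (delta_mx 0 a) in
  trace_norm (erasure e1 rho - erasure e2 rho) = `|(e1 - e2)%:C| * 2.
Proof.
move=> rho; have [_ tr_rho] := is_state_diag_delta a.
rewrite erasure_sub kraus_map_embed kraus_map_erase tr_rho scale1r.
set c := (e1 - e2)%:C.
have -> : c *: (block_mx rho 0 0 0 - block_mx 0 0 0 1%:M) =
          diag_mx (row_mx (c *: delta_mx 0 a) (- c)%:M).
  rewrite diag_mx_row opp_block_mx add_block_mx scale_block_mx.
  congr block_mx; apply/matrixP => i j; rewrite !mxE.
  - by rewrite subr0 -[RHS]mulrnAr.
  - by rewrite subrr mulr0.
  - by rewrite subrr mulr0.
  - by rewrite (ord1 i) (ord1 j) eqxx sub0r mulrN1 !mulr1n.
have c_real : c \is Num.real by apply/complex_realP; exists (e1 - e2).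
rewrite trace_norm_diag => [|i]; last first.
  rewrite -(splitK i); case: split => b; rewrite ?row_mxEl ?row_mxEr !mxE.
    by rewrite rpredM // ger0_real.
  by rewrite rpredMn ?rpredN.
rewrite big_split_ord /= big_ord1 row_mxEr mxE normrN.
have delta_ge0 i : 0 <= (delta_mx 0 a : 'rV[C]_m) 0 i by rewrite mxE ler0n.
under eq_bigr => i _ do
  rewrite row_mxEl [(c *: _ : 'rV[C]_m) _ _]mxE normrM (ger0_norm (delta_ge0 i)).
by rewrite -mulr_sumr -mxtrace_diag tr_rho mulr1 mulr_natr mulr2n.
Qed.

End Erasure.

Theorem theorem10 (R : realType) (d : nat) (eps1 eps2 : R) :
  (0 < d)%N -> 0 <= eps1 <= 1 -> 0 <= eps2 <= 1 ->
  exists rho0 : 'M[R[i]]_d,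
    is_state rho0 /\
    (forall rho : 'M[R[i]]_d, is_state rho ->
       psucc_single (erasure eps1) (erasure eps2) rho
       <= psucc_single (erasure eps1) (erasure eps2) rho0) /\
    (forall (d' : nat) (rhoAB : 'M[R[i]]_(d * d')), is_state rhoAB ->
       psucc_bip (erasure eps1) (erasure eps2) rhoAB
       <= psucc_single (erasure eps1) (erasure eps2) rho0).
Proof.
move=> d_gt0 _ _; set a : 'I_d := Ordinal d_gt0.
exists (diag_mx (delta_mx 0 a)); split; first exact: is_state_diag_delta.
have quarter_gt0 : (0 : R[i]) < 4^-1 by rewrite invr_gt0 ltr0n.
rewrite /psucc_single /psucc_bip trace_norm_erasure_sub_delta.
split => [rho rho_state | d' rho rho_state]; rewrite lerD2l ler_pM2l //.
  exact: trace_norm_erasure_sub_le.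
exact: trace_norm_apply_A_erasure_sub_le.
Qed.
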